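(* Let $m,n,k,a$ be natural numbers with $n\geq 1$, $k\geq 1$, $m>1$ and $1\leq a\leq 9$. Then the equation $$B_nB_{n+1}\cdots B_{n+k} = a\left(\frac{10^m-1}{9}\right)$$ has no solution. That is, no product of two or more consecutive balancing numbers is a decimal repdigit with at least two digits.
   Context: The balancing sequence $(B_n)_{n\geq 0}$ is defined by $B_0=0$, $B_1=1$ and $B_{n+1}=6B_n-B_{n-1}$ for $n\geq 1$. For $1\le a\le 9$ and $m\ge 1$, the number $a\frac{10^m-1}{9}$ is the decimal integer consisting of $m$ copies of the digit $a$. *)

From mathcomp Require Import all_boot.
Set Implicit Arguments. Unset Strict Implicit. Unset Printing Implicit Defensive.

(* pair (B_n, B_{n+1}) *)
Fixpoint bal_pair (n : nat) : nat * nat :=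
  match n with
  | 0 => (0, 1)
  | n'.+1 => let: (x, y) := bal_pair n' in (y, 6 * y - x)
  end.

Definition B (n : nat) : nat := (bal_pair n).1.

Definition repdigit (a m : nat) : nat := a * ((10 ^ m - 1) %/ 9).

Lemma B0 : B 0 = 0. Proof. by []. Qed.
Lemma B1 : B 1 = 1. Proof. by []. Qed.

(* sanity: the defining recurrence (truncated subtraction never truncates here,
   since B is increasing) *)
Lemma B_rec n : 1 <= n -> B n.+1 = 6 * B n - B n.-1.
Proof.
case: n => // n _; rewrite /B /=.
by case: (bal_pair n) => x y /=.
Qed.

From mathcomp Require Import all_boot.
From mathcomp Require Import zify.

Set Implicit Arguments.
Unset Strict Implicit.
Unset Printing Implicit Defensive.

(* Modulo 100 a repdigit with at least two digits ends in [aa], i.e. is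
   [11 a]; the pairs (B_n, B_{n+1}) modulo 100 are periodic with period 60,
   and a finite check shows that no B_n B_{n+1} ends in [aa].  A product of
   three or more consecutive factors contains an even index and an index
   divisible by 3, so it is divisible by 2 and by 5, whereas the repdigit
   ends in the nonzero digit [a]. *)

(* [- x] is written [+ (d - 1) x] to avoid truncated subtraction. *)
Definition bal_step (d : nat) (p : nat * nat) : nat * nat :=
  (p.2, (6 * p.2 + (d - 1) * p.1) %% d).

Definition bal_mod (d n : nat) : nat * nat := iter n (bal_step d) (0, 1).

Lemma B_le_succ n : B n <= B n.+1.
Proof.
have -> : B n.+1 = (bal_pair n).2 by rewrite /B /=; case: (bal_pair n).
elim: n => //= n; rewrite /B /=; case: (bal_pair n) => x y /=; lia.
Qed.

Lemma bal_modE d n : 1 < d -> bal_mod d n = (B n %% d, B n.+1 %% d).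
Proof.
move=> d_gt1; elim: n => [|n IHn]; first by rewrite /bal_mod /B /= mod0n modn_small.
rewrite /bal_mod iterS -/(bal_mod d n) IHn /bal_step /= (B_rec (ltn0Sn n)) /=.
congr pair; rewrite -modnDm !modnMmr modnDm.
apply/eqP; rewrite eqn_mod_dvd ?(leq_trans (leq_subr _ _) (leq_addr _ _)) //.
have le_Bn_dBn : B n <= d * B n by rewrite leq_pmull // ltnW.
have := B_le_succ n; rewrite mulnBl mul1n => le_Bn_BSn.
have -> : 6 * B n.+1 + (d * B n - B n) - (6 * B n.+1 - B n) = d * B n by lia.
exact: dvdn_mulr.
Qed.

Lemma iter_mod_period (T : Type) (f : T -> T) (x : T) p n :
  iter p f x = x -> iter n f x = iter (n %% p) f x.
Proof.
move=> per; rewrite {1}(divn_eq n p) addnC iterD; congr iter.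
by elim: (n %/ p) => // q IHq; rewrite mulSn iterD IHq per.
Qed.

Lemma bal_mod_period d p n :
  bal_mod d p = (0, 1) -> bal_mod d n = bal_mod d (n %% p).
Proof. exact: iter_mod_period. Qed.

Lemma B_mod_period d p n :
  1 < d -> bal_mod d p = (0, 1) -> B n %% d = B (n %% p) %% d.
Proof.
by move=> d_gt1 /(bal_mod_period n); rewrite !bal_modE //; case.
Qed.

Lemma dvd2_B_double n : 2 %| B n.*2.
Proof.
rewrite /dvdn (@B_mod_period 2 2) //.
by rewrite -muln2 modnMl.
Qed.

Lemma dvd5_B_triple n : 5 %| B (3 * n).
Proof.
rewrite /dvdn (@B_mod_period 5 6) //.
have -> : 3 * n %% 6 = 3 * (n %% 2) by rewrite muln_modr.
by case: (n %% 2) (ltn_pmod n (isT : 0 < 2)) => [|[|]].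
Qed.

Lemma dvdn_prod_nat d m n i (F : nat -> nat) :
  m <= i < n -> d %| F i -> d %| \prod_(m <= j < n) F j.
Proof.
case/andP=> le_mi lt_in dvd_Fi.
rewrite (big_cat_nat le_mi (ltnW lt_in)) (big_ltn lt_in) /=.
by apply: dvdn_mull; apply: dvdn_mulr.
Qed.

Lemma dvd10_prod_B m n : m + 3 <= n -> 10 %| \prod_(m <= i < n) B i.
Proof.
move=> len_ge3; rewrite (@Gauss_dvd 2 5) //; apply/andP; split.
  apply: (@dvdn_prod_nat _ _ _ ((m.+1 %/ 2).*2)); first lia.
  exact: dvd2_B_double.
apply: (@dvdn_prod_nat _ _ _ (3 * (m.+2 %/ 3))); first lia.
exact: dvd5_B_triple.
Qed.

Lemma bal_mod100_prod_check :
  all (fun r => let p := bal_mod 100 r in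
         all (fun a => p.1 * p.2 %% 100 != 11 * a) (iota 1 9))
      (iota 0 60).
Proof. by vm_compute. Qed.

Lemma bal_mod100_period : bal_mod 100 60 = (0, 1).
Proof. by vm_compute. Qed.

Lemma B_mul_succ_mod100 n a :
  1 <= a <= 9 -> B n * B n.+1 %% 100 != 11 * a.
Proof.
move=> a_range; rewrite -modnMm.
have := bal_mod_period n bal_mod100_period; rewrite bal_modE // => residues.
rewrite [B n %% 100](f_equal fst residues) [B n.+1 %% 100](f_equal snd residues).
have /allP/(_ (n %% 60)) := bal_mod100_prod_check.
rewrite mem_iota ltn_mod => /(_ isT) /allP; apply.
by rewrite mem_iota; lia.
Qed.

Lemma repunitSS m : (10 ^ m.+2 - 1) %/ 9 = 100 * ((10 ^ m - 1) %/ 9) + 11.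
Proof.
have pos : 0 < 10 ^ m by rewrite expn_gt0.
have dvd9 : 9 %| 10 ^ m - 1.
  by rewrite -eqn_mod_dvd // -modnXm /= exp1n.
have -> : 10 ^ m.+2 - 1 = 100 * (10 ^ m - 1) + 9 * 11.
  by rewrite !expnS; lia.
by rewrite divnDl ?dvdn_mull // mulKn // muln_divA.
Qed.

Lemma repdigit_mod100 a m : 1 < m -> repdigit a m %% 100 = 11 * a %% 100.
Proof.
case: m => [|[|m]] // _.
by rewrite /repdigit repunitSS mulnDr mulnCA -modnDml modnMr add0n mulnC.
Qed.

Theorem theorem2 (m n k a : nat) :
  1 <= n -> 1 <= k -> 1 < m -> 1 <= a <= 9 ->
  \prod_(n <= i < n + k + 1) B i <> repdigit a m.
Proof.
move=> _ k_gt0 m_gt1 a_range prodE.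
have rep100 := repdigit_mod100 a m_gt1; rewrite -prodE in rep100.
have [k_le1 | k_ge2] := leqP k 1.
  move: rep100; have {k_gt0 k_le1} -> : k = 1 by lia.
  rewrite !addn1 big_nat_recl // big_nat1 => rep100.
  have := B_mul_succ_mod100 n a_range.
  by rewrite rep100 modn_small ?eqxx //; lia.
have /eqP : 10 %| \prod_(n <= i < n + k + 1) B i by apply: dvd10_prod_B; lia.
by rewrite -(modn_dvdm _ (isT : 10 %| 100)) rep100 modn_dvdm //; lia.
Qed.
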